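(* For every $n\ge 1$, $$S(C_n)=\sum_{r=1}^{n}(-1)^r\sum_{\substack{k_1+\cdots+k_r=n\\ k_i\ge 1}}\frac{n!}{k_1!\cdots k_r!}\,C_{k_1}\cdots C_{k_r},\qquad S_\sigma(C_n)=\sum_{r=1}^{n}(-1)^r\sum_{\substack{k_1+\cdots+k_r=n\\ k_i\ge 1}}C_{k_1}\cdots C_{k_r}.$$
   Context: Let $k$ be a field of characteristic $0$. Rooted trees are finite and non-planar; $\bullet$ denotes the one-vertex tree. Let $\mathcal H$ be the free commutative $k$-algebra generated by isomorphism classes of rooted trees having at least one edge; its monomials are rooted forests all of whose components have at least one edge, and its unit is identified with $\bullet$. A subforest of a rooted tree $t$ is either the trivial subforest $\bullet$ or a nonempty set of pairwise vertex-disjoint subtrees of $t$, each having at least one edge; it is identified with the product of its components in $\mathcal H$. For a subforest $s$ of $t$, $t/s$ is the rooted tree obtained by contracting each component of $s$ to a single vertex. The coproduct $\Delta$ is the algebra morphism with $\Delta(t)=\sum_{s} s\otimes t/s$ over all subforests $s$ of $t$ (counted as subsets of $t$), making $\mathcal H$ a connected Hopf algebra graded by number of edges, with antipode $S$. For a forest $s=t_1\cdots t_n$, $\sigma(s)=\prod_j|\mathrm{Aut}(t_j)|$; $A_\sigma(s)=\sigma(s)s$ extended linearly; $\Delta_\sigma=(A_\sigma\otimes A_\sigma)\circ\Delta\circ A_\sigma^{-1}$ is another Hopf algebra coproduct on the same algebra, with antipode $S_\sigma=A_\sigma\circ S\circ A_\sigma^{-1}$. $C_n$ is the corolla with $n$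 edges (root joined to $n$ leaves), $C_0=\bullet$. *)

From HB Require Import structures.
From mathcomp Require Import all_boot all_order all_algebra all_fingroup.
Set Implicit Arguments. Unset Strict Implicit. Unset Printing Implicit Defensive.
Import GRing.Theory.
Local Open Scope ring_scope.

Inductive tree := Node of seq tree.

Definition children (t : tree) : seq tree := let: Node cs := t in cs.

Fixpoint enc (t : tree) : GenTree.tree unit :=
  let: Node cs := t in GenTree.Node 0 (map enc cs).
Fixpoint dec (g : GenTree.tree unit) : tree :=
  match g with
  | GenTree.Leaf _ => Node [::]
  | GenTree.Node _ gs => Node (map dec gs)
  end.
Fixpoint encK (t : tree) : dec (enc t) = t :=
  match t return dec (enc t) = t with
  | Node cs => f_equal Node
      ((fix go (l : seq tree) : map dec (map enc l) = l :=
          match l return map dec (map enc l) = l with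
          | [::] => erefl
          | c :: l' => f_equal2 cons (encK c) (go l')
          end) cs)
  end.
HB.instance Definition _ := Countable.copy tree (can_type encK).

Fixpoint edges (t : tree) : nat :=
  let: Node cs := t in sumn (map (fun c => (edges c).+1) cs).

(* canonical representative of the isomorphism class of a (non-planar) tree:
   children recursively sorted w.r.t. a total order on planar trees *)
Definition tle (a b : tree) : bool := (pickle a <= pickle b)%N.
Fixpoint canon (t : tree) : tree :=
  let: Node cs := t in Node (sort tle (map canon cs)).

(* A forest is a seq of trees; the monomial of H it represents: drop the
   one-vertex components (identified with the unit), and take the multiset of
   isomorphism classes of the remaining components (a sorted canonical seq). *)
Definition mono (f : seq tree) : seq tree :=
  sort tle (map canon [seq t <- f | (0 < edges t)%N]).

(* basis monomials are represented by forests all of whose components have an edge *)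
Definition is_mono (f : seq tree) : bool := all (fun t => (0 < edges t)%N) f.

(* elements of H: formal finite linear combinations of forests *)
Definition formal (k : fieldType) := seq (k * seq tree).

Definition coef (k : fieldType) (x : formal k) (m : seq tree) : k :=
  \sum_(p <- x | mono p.2 == m) p.1.

Definition heq (k : fieldType) (x y : formal k) : Prop :=
  forall m, coef x m = coef y m.

Definition fmul (k : fieldType) (x y : formal k) : formal k :=
  [seq (p.1 * q.1, p.2 ++ q.2) | p <- x, q <- y].

Definition single (k : fieldType) (f : seq tree) : formal k := [:: (1, f)].

Definition eta_eps (k : fieldType) (f : seq tree) : formal k :=
  if f is [::] then single k [::] else [::].

(* A subforest of t corresponds to a subset E' of the edge set of t: its
   components are the connected components of (V(t),E') having at least one
   edge, and t/s is obtained by contracting the edges of E'.  The empty set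
   corresponds to the trivial subforest.
   marks t lists, for every subset of edges of t, the triple
   (component containing the root, other components, contracted tree). *)
Fixpoint marks (t : tree) : seq (tree * seq tree * tree) :=
  let: Node cs := t in
  let fix go (l : seq tree) : seq (seq tree * seq tree * seq tree) :=
    match l with
    | [::] => [:: ([::], [::], [::])]
    | c :: l' =>
        flatten [seq
          flatten [seq
            [seq (if b then
                    (r.1.1 :: x.1.1, r.1.2 ++ x.1.2, children r.2 ++ x.2)
                  else
                    (x.1.1,
                     (if (0 < edges r.1.1)%N then r.1.1 :: r.1.2 else r.1.2) ++ x.1.2,
                     r.2 :: x.2))
            | x <- go l']
          | b <- [:: true; false]]
        | r <- marks c]
    end in
  [seq (Node x.1.1, x.1.2, Node x.2) | x <- go cs].

(* Delta(t) = sum over subforests s of  s (x) t/s  (as pairs of forests;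
   the trivial subforest and the one-vertex quotient are the empty forest = 1) *)
Definition tdelta (t : tree) : seq (seq tree * seq tree) :=
  [seq ((if (0 < edges x.1.1)%N then x.1.1 :: x.1.2 else x.1.2),
        (if (0 < edges x.2)%N then [:: x.2] else [::]))
  | x <- marks t].

Definition fdelta (f : seq tree) : seq (seq tree * seq tree) :=
  foldr (fun t acc => [seq (p.1 ++ q.1, p.2 ++ q.2) | p <- tdelta t, q <- acc])
        [:: ([::], [::])] f.

(* m o (S (x) id) o Delta  and  m o (id (x) S) o Delta on a basis forest *)
Definition conv_left (k : fieldType) (S : seq tree -> formal k) (f : seq tree) : formal k :=
  flatten [seq fmul (S p.1) (single k p.2) | p <- fdelta f].
Definition conv_right (k : fieldType) (S : seq tree -> formal k) (f : seq tree) : formal k :=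
  flatten [seq fmul (single k p.1) (S p.2) | p <- fdelta f].

Fixpoint nverts (t : tree) : nat :=
  let: Node cs := t in (sumn (map nverts cs)).+1.

(* vertices numbered in preorder; parent index of each vertex (root: itself) *)
Fixpoint par_list (t : tree) (off p : nat) : seq nat :=
  let: Node cs := t in
  let fix go (l : seq tree) (o : nat) : seq nat :=
    match l with
    | [::] => [::]
    | c :: l' => par_list c o off ++ go l' (o + nverts c)%N
    end in
  p :: go cs off.+1.

Definition parent (t : tree) (v : 'I_(nverts t)) : 'I_(nverts t) :=
  insubd v (nth 0%N (par_list t 0 0) v).

(* |Aut(t)|: bijections of the vertex set commuting with the parent map
   (i.e. rooted-tree automorphisms) *)
Definition aut_card (t : tree) : nat :=
  #|[set g : {perm 'I_(nverts t)} | [forall v, g (parent v) == parent (g v)]]|.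

Definition sigma (f : seq tree) : nat := \prod_(t <- f) aut_card t.

(* S_sigma = A_sigma o S o A_sigma^{-1}, on a basis forest f *)
Definition Ssig (k : fieldType) (S : seq tree -> formal k) (f : seq tree) : formal k :=
  [seq ((sigma f)%:R^-1 * p.1 * (sigma p.2)%:R, p.2) | p <- S f].

Definition corolla (n : nat) : tree := Node (nseq n (Node [::])).

Definition compositions (n r : nat) : seq (seq nat) :=
  [seq c <- [seq map val (tval t) | t <- enum {: r.-tuple 'I_n.+1}]
   | all (fun i => (0 < i)%N) c && (sumn c == n)].

Definition rhs_S (k : fieldType) (n : nat) : formal k :=
  flatten [seq [seq ((-1) ^+ r * (n`!)%:R / (\prod_(i <- c) i`!)%:R,
                     map corolla c) | c <- compositions n r]
          | r <- iota 1 n].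

Definition rhs_Ssig (k : fieldType) (n : nat) : formal k :=
  flatten [seq [seq ((-1) ^+ r, map corolla c) | c <- compositions n r]
          | r <- iota 1 n].

From HB Require Import structures.
From mathcomp Require Import all_boot all_order all_algebra all_fingroup.
Set Implicit Arguments. Unset Strict Implicit. Unset Printing Implicit Defensive.
Import GRing.Theory.

(* Rather than single coefficients we use the "mass" [mass P x], the
   total coefficient of x on the monomials satisfying a predicate P: two
   elements are equal in H iff all their masses agree, and masses of products
   by a fixed forest are masses for a shifted predicate.

   1. Every edge subset of C_n is a set of a leaves, so Delta(C_n) is
      sum_(a <= n) binom(n,a) C_a (x) C_(n-a), and the left antipode equation
      gives S(C_n) = - sum_(a < n) binom(n,a) S(C_a) C_(n-a).
   2. The claimed sum over compositions of n satisfies the same recursion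
      (split off the last part of a composition); strong induction on n gives
      the formula for S(C_n) ([mass_S_corolla]).
   3. sigma is an invariant of the monomial: a tree is isomorphic to its
      canonical form, and isomorphic trees have equally many automorphisms.
      Since |Aut C_k| = k!, renormalizing cancels n!/(k_1!...k_r!)
      ([Ssig_corolla]). *)

Lemma tle_total : total tle.
Proof. by move=> a b; rewrite /tle leq_total. Qed.

Lemma tle_trans : transitive tle.
Proof. by move=> a b c; rewrite /tle; apply: leq_trans. Qed.

Lemma tle_anti : antisymmetric tle.
Proof. by move=> a b; rewrite /tle -eqn_leq => /eqP /(pcan_inj (@pickleK _)). Qed.

Lemma sort_tle_perm (s1 s2 : seq tree) : perm_eq s1 s2 -> sort tle s1 = sort tle s2.
Proof. by move/(perm_sortP tle_total tle_trans tle_anti). Qed.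

Lemma sort_mono (f : seq tree) : sort tle (mono f) = mono f.
Proof. exact/sorted_sort/sort_sorted/tle_total/tle_trans. Qed.

Lemma mono_cat (a b : seq tree) : mono (a ++ b) = sort tle (mono a ++ mono b).
Proof.
rewrite /mono; apply: sort_tle_perm.
by rewrite filter_cat map_cat; apply: perm_cat; rewrite perm_sym perm_sort.
Qed.

Section Mass.
Variable k : fieldType.
Local Open Scope ring_scope.

Definition mass (P : pred (seq tree)) (x : formal k) : k :=
  \sum_(p <- x | P (mono p.2)) p.1.

Lemma mass_cons P p x : mass P (p :: x) = (if P (mono p.2) then p.1 else 0) + mass P x.
Proof. by rewrite /mass big_cons; case: ifP => _ //; rewrite add0r. Qed.

Lemma mass_flatten P (L : seq (formal k)) : mass P (flatten L) = \sum_(x <- L) mass P x.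
Proof.
elim: L => [|x L IH]; first by rewrite big_nil /mass big_nil.
by rewrite /= /mass big_cat -/(mass P x) big_cons -IH.
Qed.

Lemma mass_map (T : Type) (f : T -> k) (g : T -> seq tree) (s : seq T) P :
  mass P [seq (f c, g c) | c <- s] = \sum_(c <- s | P (mono (g c))) f c.
Proof. by rewrite /mass big_map. Qed.

Lemma mass_single P g : mass P (single k g) = if P (mono g) then 1 else 0.
Proof. by rewrite mass_cons /mass big_nil addr0. Qed.

Lemma mass_coefs P x (U : seq (seq tree)) : uniq U ->
  (forall p, p \in x -> mono p.2 \in U) -> mass P x = \sum_(m <- U | P m) coef x m.
Proof.
move=> uU; elim: x => [|p x IH] hx.
  by rewrite /mass big_nil big1 // => m _; rewrite /coef big_nil.
rewrite mass_cons IH; last by move=> q hq; apply: hx; rewrite inE hq orbT.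
have hp : mono p.2 \in U by apply: hx; rewrite inE eqxx.
under [X in _ = X]eq_bigr => m _ do rewrite /coef -/(mass (pred1 m) _) mass_cons.
rewrite big_split /=; congr (_ + _).
rewrite big_mkcond (bigD1_seq (mono p.2)) //= eqxx big1 ?addr0; first by case: (P _).
by move=> m hm; rewrite eq_sym (negbTE hm); case: (P m).
Qed.

Lemma heq_mass x y P : heq x y -> mass P x = mass P y.
Proof.
move=> h; pose U := undup [seq mono p.2 | p <- x ++ y].
have uU : uniq U by rewrite undup_uniq.
have inU p : p \in x ++ y -> mono p.2 \in U.
  by move=> hp; rewrite mem_undup; apply/mapP; exists p.
rewrite (@mass_coefs P x U uU) ?(@mass_coefs P y U uU); last 2 first.
- by move=> p hp; apply: inU; rewrite mem_cat hp orbT.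
- by move=> p hp; apply: inU; rewrite mem_cat hp.
by apply: eq_bigr => m _; rewrite h.
Qed.

Lemma coef_mass x m : coef x m = mass (pred1 m) x.
Proof. by []. Qed.

Lemma mass_heq x y : (forall P, mass P x = mass P y) -> heq x y.
Proof. by move=> h m; rewrite !coef_mass. Qed.

Definition shift (P : pred (seq tree)) (g : seq tree) : pred (seq tree) :=
  fun m => P (sort tle (m ++ mono g)).

Lemma mass_mul_single P x g : mass P (fmul x (single k g)) = mass (shift P g) x.
Proof.
elim: x => [|p x IH]; first by rewrite /mass !big_nil.
have -> : fmul (p :: x) (single k g) = (p.1 * 1, p.2 ++ g) :: fmul x (single k g) by [].
by rewrite !mass_cons IH /shift mulr1 mono_cat.
Qed.

Lemma mass_shift_nil P x : mass (shift P [::]) x = mass P x.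
Proof. by apply: eq_bigl => p; rewrite /shift cats0 sort_mono. Qed.

Lemma mass_conv_left S P f :
  mass P (conv_left S f) = \sum_(p <- fdelta f) mass (shift P p.2) (S p.1).
Proof.
rewrite /conv_left mass_flatten big_map.
by apply: eq_bigr => p _; rewrite mass_mul_single.
Qed.

End Mass.

(* The coproduct of a corolla.  [mark_children] is the inner fixpoint of
   [marks]: it lists, for every edge subset of a node with children l, the
   triple (children of the root component, other components, children of the
   contracted tree). *)

Definition leaf : tree := Node [::].

Fixpoint mark_children (l : seq tree) : seq (seq tree * seq tree * seq tree) :=
  match l with
  | [::] => [:: ([::], [::], [::])]
  | c :: l' =>
        flatten [seq
          flatten [seq
            [seq (if b then
                    (r.1.1 :: x.1.1, r.1.2 ++ x.1.2, children r.2 ++ x.2)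
                  else
                    (x.1.1,
                     (if (0 < edges r.1.1)%N then r.1.1 :: r.1.2 else r.1.2) ++ x.1.2,
                     r.2 :: x.2))
            | x <- mark_children l']
          | b <- [:: true; false]]
        | r <- marks c]
  end.

Lemma marks_node cs :
  marks (Node cs) = [seq (Node x.1.1, x.1.2, Node x.2) | x <- mark_children cs].
Proof. by []. Qed.

(* [subset_sizes n] lists the cardinalities of the 2^n subsets of an n-set,
   in the order in which [marks] enumerates them on n leaves. *)
Fixpoint subset_sizes n : seq nat :=
  if n is n'.+1 then map S (subset_sizes n') ++ subset_sizes n' else [:: 0%N].

Lemma subset_sizes_le n a : a \in subset_sizes n -> (a <= n)%N.
Proof.
elim: n a => [|n IH] a /=; first by rewrite inE => /eqP ->.
by rewrite mem_cat => /orP [/mapP [b /IH hb ->]|/IH /leqW].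
Qed.

Lemma mark_leaves n :
  mark_children (nseq n leaf) =
  [seq (nseq a leaf, [::], nseq (n - a) leaf) | a <- subset_sizes n].
Proof.
elim: n => [|n IH] //=.
rewrite IH /= cats0 map_cat -!map_comp; congr (_ ++ _).
by rewrite cats0; apply/eq_in_map => a /subset_sizes_le ha /=; rewrite subSn.
Qed.

Lemma tdelta_corolla n : tdelta (corolla n) =
  [seq ((if (0 < a)%N then [:: corolla a] else [::]),
        (if (0 < n - a)%N then [:: corolla (n - a)] else [::])) | a <- subset_sizes n].
Proof.
rewrite /tdelta /corolla marks_node mark_leaves -!map_comp.
have E b : sumn [seq (edges c).+1 | c <- nseq b leaf] = b by elim: b => //= ? ->.
by apply: eq_map => a /=; rewrite !E.
Qed.

Lemma fdelta_tree t : fdelta [:: t] = tdelta t.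
Proof.
rewrite /fdelta /=.
by elim: (tdelta t) => //= p l ->; rewrite !cats0 -!surjective_pairing.
Qed.

Lemma sum_subset_sizes (k : fieldType) n (F : nat -> k) :
  (\sum_(a <- subset_sizes n) F a = \sum_(i < n.+1) F i *+ 'C(n, i))%R.
Proof.
elim: n F => [|n IH] F; first by rewrite big_ord_recl big_ord0 /= big_cons big_nil.
rewrite /= big_cat big_map /= !IH.
rewrite [in RHS]big_ord_recl /= [in X in (_ + X)%R = _]big_ord_recl /=.
under [in RHS]eq_bigr => i _ do rewrite /bump /= binS mulrnDr.
rewrite big_split /= !bin0 addrCA; congr (_ + _)%R.
rewrite addrC; congr (_ + _)%R.
by rewrite [in RHS]big_ord_recr /= bin_small // mulr0n addr0.
Qed.

Definition posn (i : nat) : bool := (0 < i)%N.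

Lemma size_le_sumn (c : seq nat) : all posn c -> (size c <= sumn c)%N.
Proof. by elim: c => //= y c IH /andP [hy /IH]; rewrite -add1n; apply: leq_add. Qed.

Lemma mem_compositions n r c :
  (c \in compositions n r) = [&& size c == r, all posn c & sumn c == n].
Proof.
rewrite /compositions mem_filter.
have [/andP [hp /eqP hs]|] := boolP (all posn c && (sumn c == n)); last by rewrite andbF.
rewrite andbT /=; apply/mapP/idP => [[t _ ->]|/eqP hr]; first by rewrite size_map size_tuple.
have hsz : size (map (@inord n) c) == r by rewrite size_map hr.
exists (Tuple hsz); first by rewrite mem_enum.
rewrite /= -map_comp -[LHS]map_id; apply/eq_in_map => x hx /=.
rewrite inordK // ltnS -hs.
by elim: c hx {hp hs hsz hr} => //= y c IH; rewrite inE => /predU1P [->|/IH/leq_trans->];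
  rewrite ?leq_addr ?leq_addl.
Qed.

Lemma uniq_compositions n r : uniq (compositions n r).
Proof.
rewrite /compositions filter_uniq // map_inj_uniq ?enum_uniq //.
by move=> t1 t2 /(inj_map val_inj) /val_inj.
Qed.

Lemma flatten_uniq_key (T U : eqType) (key : T -> U) (F : U -> seq T) (s : seq U) :
  uniq s -> (forall i, uniq (F i)) -> (forall i x, i \in s -> x \in F i -> key x = i) ->
  uniq (flatten [seq F i | i <- s]).
Proof.
move=> us uF; elim: s us => //= i s IH /andP [his us] hk.
rewrite cat_uniq uF IH //=; last by move=> j x hj; apply: hk; rewrite inE hj orbT.
rewrite andbT; apply/hasPn => x /flatten_mapP [j hj hx]; apply/negP => hxi.
have e1 := hk _ _ (mem_head _ _) hxi.
have e2 : key x = j by apply: hk hx; rewrite inE hj orbT.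
by move: his; rewrite -e1 e2 hj.
Qed.

Lemma uniq_eq_seq1 (T : eqType) (s : seq T) (a : T) : uniq s -> s =i [:: a] -> s = [:: a].
Proof.
move=> us h; have /perm_size := uniq_perm us (isT : uniq [:: a]) h.
by case: s us h => [|b [|]] //= _ /(_ b); rewrite !inE eqxx => /esym/eqP ->.
Qed.

Definition comps n := flatten [seq compositions n r | r <- iota 0 n.+1].

Lemma mem_comps n c : (c \in comps n) = all posn c && (sumn c == n).
Proof.
apply/flatten_mapP/idP => [[r _]|/andP [hp hs]].
  by rewrite mem_compositions => /and3P [_ -> ->].
exists (size c); last by rewrite mem_compositions eqxx hp hs.
by rewrite mem_iota /= add0n ltnS -(eqP hs) size_le_sumn.
Qed.

Lemma uniq_comps n : uniq (comps n).
Proof.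
apply: (@flatten_uniq_key _ _ size); first exact: iota_uniq.
  by move=> r; apply: uniq_compositions.
by move=> r x _; rewrite mem_compositions => /and3P [/eqP].
Qed.

Lemma comps0 : comps 0 = [:: [::]].
Proof.
apply: uniq_eq_seq1; first exact: uniq_comps.
by move=> [|[|y] x]; rewrite mem_comps inE //= andbF.
Qed.

Lemma comps_pos n : (0 < n)%N -> comps n = flatten [seq compositions n r | r <- iota 1 n].
Proof.
move=> hn; rewrite /comps /=.
case e: (compositions n 0) => [|c l] //; have : c \in compositions n 0 by rewrite e mem_head.
by rewrite mem_compositions => /and3P [/eqP/size0nil -> _ /eqP hs]; rewrite -hs in hn.
Qed.

Lemma comps_split n : (0 < n)%N ->
  perm_eq (comps n) (flatten [seq [seq rcons c (n - a) | c <- comps a] | a <- iota 0 n]).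
Proof.
move=> hn; apply: uniq_perm; first exact: uniq_comps.
  apply: (@flatten_uniq_key _ _ (fun x => n - last 0%N x)); first exact: iota_uniq.
    by move=> a; rewrite map_inj_uniq ?uniq_comps // => x y /rcons_inj [].
  move=> a x; rewrite mem_iota add0n /= => ha /mapP [c hc ->].
  by rewrite last_rcons subKn // ltnW.
move=> x; rewrite mem_comps; apply/idP/flatten_mapP.
  case/lastP: x => [|c b]; first by move=> /andP [_ /eqP h]; move: hn; rewrite -h.
  rewrite -cats1 all_cat sumn_cat /= addn0 andbT => /andP [/andP [hc hb] /eqP hs].
  exists (sumn c); first by rewrite mem_iota add0n /= -hs -{1}(addn0 (sumn c)) ltn_add2l.
  by apply/mapP; exists c; rewrite ?mem_comps ?hc ?eqxx // -hs addKn cats1.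
move=> [a]; rewrite mem_iota add0n /= => ha /mapP [c].
rewrite mem_comps => /andP [hc /eqP hs] ->.
rewrite -cats1 all_cat sumn_cat hc /= addn0 hs andbT.
by rewrite /posn subn_gt0 ha subnKC ?eqxx // ltnW.
Qed.

Section AntipodeOfCorolla.
Variable k : fieldType.
Hypothesis char0 : [pchar k]%R =i pred0.
Local Open Scope ring_scope.

Definition rhs_mass n (Q : pred (seq tree)) : k :=
  \sum_(c <- comps n | Q (mono (map corolla c)))
     (-1) ^+ size c * (n`!)%:R / (\prod_(i <- c) i`!)%:R.

Lemma mass_rhs_S n Q : (0 < n)%N -> mass Q (rhs_S k n) = rhs_mass n Q.
Proof.
move=> hn; rewrite /rhs_S mass_flatten big_map /rhs_mass comps_pos // big_flatten big_map.
apply: eq_bigr => r _; rewrite mass_map.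
rewrite [LHS]big_seq_cond [RHS]big_seq_cond; apply: eq_bigr => c /andP [hc _].
by move: hc; rewrite mem_compositions => /and3P [/eqP -> _ _].
Qed.

Lemma mass_unit Q : mass Q (single k [::]) = rhs_mass 0 Q.
Proof.
rewrite mass_single /rhs_mass comps0 big_cons big_nil /=.
by case: (Q [::]); rewrite !big_nil ?addr0 // expr0 mul1r divr1.
Qed.

Lemma natf_neq0 m : (0 < m)%N -> (m%:R : k) != 0.
Proof. by move=> hm; rewrite (pcharf0P _).1 // -lt0n. Qed.

(* The field identity behind one step of the recursion: the factor B =
   (n-a)! of the new part cancels against the binomial expansion n! =
   binom(n,a) a! (n-a)!. *)
Lemma cancel_last_factorial (E C A B P : k) :
  B != 0 -> -1 * E * (C * (A * B)) / (P * B) = - (E * A / P * C).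
Proof.
move=> hB; rewrite invfM mulN1r !mulNr; congr (- _).
rewrite (mulrC P^-1) !mulrA mulfK // -!mulrA; congr (E * _).
by rewrite mulrCA; congr (_ * _); rewrite mulrC.
Qed.

(* The right-hand side obeys the antipode recursion: appending a part
   n - a to a composition of a multiplies its term by -binom(n, a) and by
   the corolla C_(n-a). *)
Lemma rhs_mass_rec n Q : (0 < n)%N ->
  rhs_mass n Q = - \sum_(i < n) rhs_mass i (shift Q [:: corolla (n - i)]) *+ 'C(n, i).
Proof.
move=> hn; rewrite /rhs_mass (perm_big _ (comps_split hn)) big_flatten big_map.
rewrite -(big_mkord xpredT (fun i => rhs_mass i (shift Q [:: corolla (n - i)]) *+ 'C(n, i))).
rewrite /index_iota subn0 -sumrN; apply: eq_big_seq => a; rewrite mem_iota add0n /= => ha.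
rewrite big_map -sumrMnl -sumrN; apply: eq_big => [c|c hc].
  by rewrite /shift map_rcons -cats1 mono_cat.
rewrite size_rcons exprS big_rcons /= -(bin_fact (ltnW ha)) !natrM.
by rewrite cancel_last_factorial ?natf_neq0 ?fact_gt0 // !mulr_natr.
Qed.

Variable S : seq tree -> formal k.
Hypothesis S_left : forall f, is_mono f -> heq (conv_left S f) (eta_eps k f).

Definition corolla_forest (j : nat) : seq tree := if (0 < j)%N then [:: corolla j] else [::].

Lemma mass_S_corolla n Q : mass Q (S (corolla_forest n)) = rhs_mass n Q.
Proof.
elim/ltn_ind: n Q => -[|n] IH Q.
  rewrite -mass_unit -(heq_mass Q (S_left (isT : is_mono [::]))) mass_conv_left.
  by rewrite /= big_cons big_nil addr0 mass_shift_nil.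
have hS : heq (S [:: corolla n.+1]) (rhs_S k n.+1).
  move=> m; have := S_left (isT : is_mono [:: corolla n.+1]) m.
  rewrite !coef_mass [mass _ (eta_eps _ _)]/mass big_nil mass_conv_left.
  rewrite fdelta_tree tdelta_corolla big_map sum_subset_sizes big_ord_recr /=.
  rewrite subnn mass_shift_nil binn mulr1n addrC => /eqP; rewrite addr_eq0 => /eqP ->.
  rewrite mass_rhs_S // rhs_mass_rec //; congr (- _).
  by apply: eq_bigr => i _; rewrite subn_gt0 ltn_ord -/(corolla_forest i) IH.
by rewrite /corolla_forest /= (heq_mass Q hS) mass_rhs_S.
Qed.

End AntipodeOfCorolla.

Fixpoint tree_ind_all (P : tree -> Prop)
    (IH : forall cs, foldr (fun c acc => P c /\ acc) True cs -> P (Node cs)) (t : tree) : P t :=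
  let: Node cs := t in
  IH cs ((fix all_children (l : seq tree) : foldr (fun c acc => P c /\ acc) True l :=
            if l is c :: l' then conj (tree_ind_all IH c) (all_children l') else I) cs).

Lemma tree_mem_ind (P : tree -> Prop) :
  (forall cs, (forall c, c \in cs -> P c) -> P (Node cs)) -> forall t, P t.
Proof.
move=> IH; apply: tree_ind_all => cs Hcs; apply: IH.
elim: cs Hcs => // d cs IHcs [Pd Pcs] c; rewrite inE => /predU1P [-> //|]; exact: IHcs.
Qed.

(* Trees as numbered vertex sets.  [par_list t off p] numbers the vertices
   of t in preorder from off, the root having parent p; [par t v] is the
   parent of vertex v in the numbering from 0.
   The inner fixpoint of [par_list]: the children l numbered from o, all
   attached to the parent off. *)
Fixpoint par_children (l : seq tree) (o off : nat) : seq nat :=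
  if l is c :: l' then par_list c o off ++ par_children l' (o + nverts c) off else [::].

Lemma par_list_node cs off p : par_list (Node cs) off p = p :: par_children cs off.+1 off.
Proof. by rewrite /=; congr cons; elim: cs off.+1 => //= c cs IH o; rewrite IH. Qed.

Lemma size_par_list t off p : size (par_list t off p) = nverts t.
Proof.
move: off p; elim/tree_mem_ind: t => cs IH off p; rewrite par_list_node /=; congr S.
elim: cs IH off.+1 => //= c cs IHcs IH o.
by rewrite size_cat IH ?mem_head // IHcs // => d hd; apply: IH; rewrite inE hd orbT.
Qed.

Lemma par_list_shift t off p :
  par_list t off p = p :: map (addn off) (behead (par_list t 0 0)).
Proof.
move: off p; elim/tree_mem_ind: t => cs IH off p; rewrite !par_list_node /=; congr cons.
suff /(_ 1%N) : forall o, par_children cs (o + off) off = map (addn off) (par_children cs o 0).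
  by [].
elim: cs IH => //= c cs IHcs IH o.
rewrite map_cat IH ?mem_head // [par_list c o 0]IH ?mem_head //= -map_comp.
rewrite -addnA (addnC off) addnA IHcs; last by move=> d hd; apply: IH; rewrite inE hd orbT.
by rewrite addn0; congr (_ :: _ ++ _); apply/eq_map => x /=; rewrite addnA (addnC off).
Qed.

Definition par (t : tree) (v : nat) : nat := nth 0%N (par_list t 0 0) v.

(* The number of the first vertex of the i-th child, minus one. *)
Definition offset (l : seq tree) (i : nat) : nat := sumn (map nverts (take i l)).

Lemma nverts_gt0 t : (0 < nverts t)%N.
Proof. by case: t. Qed.

Lemma par_root t : par t 0 = 0%N.
Proof. by case: t. Qed.

Lemma nth_par_children l o i j : (i < size l)%N -> (j < nverts (nth leaf l i))%N ->
  nth 0%N (par_children l o 0) (offset l i + j) =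
  nth 0%N (par_list (nth leaf l i) (o + offset l i) 0) j.
Proof.
elim: l o i => //= c l IH o [|i] /= hi hj.
  by rewrite /offset /= addn0 add0n nth_cat size_par_list hj.
rewrite nth_cat size_par_list /offset /= -addnA ltnNge leq_addr /= addKn.
by rewrite IH // addnA.
Qed.

Lemma par_node cs i j : (i < size cs)%N -> (j < nverts (nth leaf cs i))%N ->
  par (Node cs) (offset cs i + j).+1 =
  if j == 0%N then 0%N else (offset cs i + par (nth leaf cs i) j).+1.
Proof.
move=> hi hj; rewrite /par par_list_node /= nth_par_children // par_list_shift.
case: j hj => [|j] hj //=.
rewrite (nth_map 0%N); last by rewrite size_behead size_par_list; case: (nverts _) hj.
by rewrite add1n nth_behead.
Qed.

(* [locate l v] = (i, j): the v-th non-root vertex is vertex j of child i. *)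
Fixpoint locate (l : seq tree) (v : nat) : nat * nat :=
  if l is c :: l' then
    (if (v < nverts c)%N then (0%N, v)
     else ((locate l' (v - nverts c)).1.+1, (locate l' (v - nverts c)).2))
  else (0%N, v).

Lemma locate_offset l i j : (i < size l)%N -> (j < nverts (nth leaf l i))%N ->
  locate l (offset l i + j) = (i, j).
Proof.
elim: l i => //= c l IH [|i] /= hi hj; first by rewrite /offset /= add0n hj.
by rewrite /offset /= -addnA ltnNge leq_addr /= addKn -/(offset l i) IH.
Qed.

Lemma locate_spec l v : (v < sumn (map nverts l))%N ->
  [/\ ((locate l v).1 < size l)%N, ((locate l v).2 < nverts (nth leaf l (locate l v).1))%N
    & v = offset l (locate l v).1 + (locate l v).2].
Proof.
elim: l v => //= c l IH v hv; case: ifP => h /=; first by rewrite /offset /= add0n.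
have hv' : (v - nverts c < sumn (map nverts l))%N by rewrite ltn_subLR // leqNgt h.
case: (IH _ hv') => h1 h2 h3; split => //.
by rewrite /offset /= -addnA -/(offset l _) -h3 subnKC // leqNgt h.
Qed.

Lemma offset_lt l i j : (i < size l)%N -> (j < nverts (nth leaf l i))%N ->
  (offset l i + j < sumn (map nverts l))%N.
Proof.
elim: l i => //= c l IH [|i] /= hi hj; last by rewrite /offset /= -addnA ltn_add2l IH.
by rewrite /offset /= add0n; apply: leq_trans hj (leq_addr _ _).
Qed.

(* Parents precede their children in preorder. *)
Lemma par_lt t v : (0 < v)%N -> (v < nverts t)%N -> (par t v < v)%N.
Proof.
move: v; elim/tree_mem_ind: t => cs IH [|w] // _ /= hw.
case: (locate_spec hw) => h1 h2 ->; rewrite par_node //.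
have [->|hj] := eqVneq (locate cs w).2 0%N; first exact: ltn0Sn.
by rewrite ltnS ltn_add2l IH ?mem_nth // lt0n.
Qed.

Lemma par_lt_nverts t v : (v < nverts t)%N -> (par t v < nverts t)%N.
Proof.
case: v => [|v] h; first by rewrite par_root nverts_gt0.
exact: ltn_trans (par_lt _ h) h.
Qed.

Lemma par_fixed_root t v : (v < nverts t)%N -> par t v = v -> v = 0%N.
Proof. by case: v => [|v] // h e; have := par_lt (isT : (0 < v.+1)%N) h; rewrite e ltnn. Qed.

(* A rooted-tree isomorphism from t to t': an injection between the vertex
   numberings (hence a bijection) commuting with the parent maps. *)
Definition Iso t t' (f : nat -> nat) :=
  [/\ nverts t = nverts t',
      forall v, (v < nverts t)%N -> (f v < nverts t')%N,
      forall u v, (u < nverts t)%N -> (v < nverts t)%N -> f u = f v -> u = v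
    & forall v, (v < nverts t)%N -> f (par t v) = par t' (f v)].

Lemma Iso_root t t' f : Iso t t' f -> f 0%N = 0%N.
Proof.
case=> _ hr _ hp; have := hp 0%N (nverts_gt0 t); rewrite par_root => e.
by apply: (par_fixed_root (hr _ (nverts_gt0 t))); rewrite -e.
Qed.

Lemma inj_below_inverse n (f : nat -> nat) :
  (forall v, (v < n)%N -> (f v < n)%N) ->
  (forall u v, (u < n)%N -> (v < n)%N -> f u = f v -> u = v) ->
  exists g : nat -> nat, [/\ forall v, (v < n)%N -> (g v < n)%N,
    forall v, (v < n)%N -> g (f v) = v & forall v, (v < n)%N -> f (g v) = v].
Proof.
move=> r i; pose s := map f (iota 0 n).
have us : uniq s by rewrite map_inj_in_uniq ?iota_uniq // => u v; rewrite !mem_iota; exact: i.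
have hs v : (v < n)%N -> v \in s.
  have ss : {subset s <= iota 0 n} by move=> x /mapP [u]; rewrite !mem_iota => /r hu ->.
  have [_ ->] := uniq_min_size us ss (eq_leq (esym (size_map f _))).
  by rewrite mem_iota.
have gr v : (v < n)%N -> (index v s < n)%N.
  by move=> hv; rewrite -(size_iota 0 n) -(size_map f) index_mem hs.
have fg v : (v < n)%N -> f (index v s) = v.
  move=> hv; have hi := gr _ hv.
  by rewrite -{2}(nth_index 0%N (hs _ hv)) (nth_map 0%N) ?nth_iota ?size_iota.
by exists (index^~ s); split => // v hv; apply: i; rewrite ?fg ?gr ?r.
Qed.

Lemma Iso_sym t t' f : Iso t t' f -> exists g, [/\ Iso t' t g,
  (forall v, (v < nverts t)%N -> g (f v) = v) & (forall v, (v < nverts t')%N -> f (g v) = v)].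
Proof.
case=> e r i p; rewrite -e in r *.
have [g [gr gf fg]] := inj_below_inverse r i.
exists g; split => //; split; rewrite -?e //.
- by move=> u v hu hv h; rewrite -(fg _ hu) -(fg _ hv) h.
- by move=> v hv; rewrite -{1}(fg _ hv) -p ?gr // gf // par_lt_nverts ?gr.
Qed.

(* Isomorphic trees have equally many automorphisms: conjugating by an
   isomorphism transports automorphisms of t injectively to t'. *)

Definition root_vertex (t : tree) : 'I_(nverts t) := Ordinal (nverts_gt0 t).

Definition cast (t t' : tree) (h : nat -> nat) (v : 'I_(nverts t)) : 'I_(nverts t') :=
  insubd (root_vertex t') (h v).
Arguments cast : clear implicits.

Lemma cast_val t t' h v : (h (val v) < nverts t')%N -> val (cast t t' h v) = h v.
Proof. by move=> hv; rewrite /cast val_insubd hv. Qed.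

Lemma parent_val t (v : 'I_(nverts t)) : val (parent v) = par t v.
Proof. by rewrite /parent val_insubd -/(par t v) par_lt_nverts. Qed.

Definition auts (t : tree) : {set {perm 'I_(nverts t)}} :=
  [set s : {perm 'I_(nverts t)} | [forall v, s (parent v) == parent (s v)]].

Section Transport.
Variables (t t' : tree) (f g : nat -> nat).
Hypotheses (isoF : Iso t t' f) (isoG : Iso t' t g).
Hypothesis gK : forall v, (v < nverts t)%N -> g (f v) = v.
Hypothesis fK : forall v, (v < nverts t')%N -> f (g v) = v.

Lemma castK (v : 'I_(nverts t)) : cast t' t g (cast t t' f v) = v.
Proof.
case: isoF isoG => _ rf _ _ [_ rg _ _].
by apply: val_inj; rewrite !cast_val ?gK ?rf //= cast_val ?rf // gK.
Qed.

Lemma transport_inj (s : {perm 'I_(nverts t)}) :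
  injective (fun w => cast t t' f (s (cast t' t g w))).
Proof.
case: isoF isoG => _ rf jf _ [_ rg _ _].
move=> w1 w2 /(congr1 val); rewrite !cast_val ?rf ?ltn_ord // => /jf e.
have /perm_inj : s (cast t' t g w1) = s (cast t' t g w2) by apply: val_inj; apply: e.
move/(congr1 val); rewrite !cast_val ?rg ?ltn_ord // => eg.
by apply: val_inj; rewrite /= -(fK (ltn_ord w1)) -(fK (ltn_ord w2)) eg.
Qed.

Definition transport (s : {perm 'I_(nverts t)}) : {perm 'I_(nverts t')} :=
  perm (@transport_inj s).

Lemma transport_injective : injective transport.
Proof.
case: isoF => _ rf jf _ s1 s2 e; apply/permP => v.
have := congr1 (fun q : {perm _} => q (cast t t' f v)) e; rewrite !permE castK.
by move/(congr1 val); rewrite !cast_val ?rf ?ltn_ord // => /jf e'; apply: val_inj; apply: e'.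
Qed.

Lemma transport_aut s : s \in auts t -> transport s \in auts t'.
Proof.
case: isoF isoG => _ rf _ pf [_ rg _ pg].
rewrite !inE => /forallP hs; apply/forallP => w; apply/eqP; rewrite !permE; apply: val_inj.
have -> : cast t' t g (parent w) = parent (cast t' t g w).
  have hw := rg _ (ltn_ord w); have hpw := rg _ (par_lt_nverts (ltn_ord w)).
  by apply: val_inj; rewrite parent_val !cast_val ?parent_val ?hw ?hpw // pg.
rewrite (eqP (hs _)) parent_val !cast_val ?parent_val ?rf ?ltn_ord ?pf //.
exact: par_lt_nverts.
Qed.

Lemma aut_card_le : (aut_card t <= aut_card t')%N.
Proof.
rewrite /aut_card -/(auts t) -/(auts t') -(card_in_imset (in2W transport_injective)).
by apply/subset_leq_card/subsetP => _ /imsetP [s hs ->]; apply: transport_aut.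
Qed.

End Transport.

Lemma aut_card_iso t t' f : Iso t t' f -> aut_card t = aut_card t'.
Proof.
move=> h; have [g [hg gK fK]] := Iso_sym h.
by apply/eqP; rewrite eqn_leq (aut_card_le h hg gK fK) (aut_card_le hg h fK gK).
Qed.

Section NodeIso.
Variables (cs ds : seq tree) (I : seq nat) (h : nat -> nat -> nat).
Hypothesis size_ds : size ds = size cs.
Hypothesis permI : perm_eq I (iota 0 (size cs)).
Hypothesis isoh :
  forall i, (i < size ds)%N -> Iso (nth leaf ds i) (nth leaf cs (nth 0%N I i)) (h i).

(* Vertex j of child i of Node ds goes to vertex h i j of child I_i. *)
Definition node_map (v : nat) : nat :=
  if v is w.+1 then
    (offset cs (nth 0%N I (locate ds w).1) + h (locate ds w).1 (locate ds w).2).+1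
  else 0%N.

Lemma size_I : size I = size cs.
Proof. by rewrite (perm_size permI) size_iota. Qed.

Lemma nth_I_lt i : (i < size ds)%N -> (nth 0%N I i < size cs)%N.
Proof.
move=> hi; have : nth 0%N I i \in iota 0 (size cs).
  by rewrite -(perm_mem permI) mem_nth // size_I -size_ds.
by rewrite mem_iota.
Qed.

Lemma nverts_node_iso : nverts (Node ds) = nverts (Node cs).
Proof.
rewrite /=; congr S; rewrite -{1}(mkseq_nth leaf ds) /mkseq -map_comp.
have -> : [seq (nverts \o nth leaf ds) i | i <- iota 0 (size ds)] =
          [seq nverts (nth leaf cs (nth 0%N I i)) | i <- iota 0 (size ds)].
  by apply/eq_in_map => i; rewrite mem_iota /= => /isoh [].
rewrite size_ds -size_I -[in RHS](mkseq_nth leaf cs) /mkseq -map_comp.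
have -> : [seq nverts (nth leaf cs (nth 0%N I i)) | i <- iota 0 (size I)] =
          [seq nverts (nth leaf cs i) | i <- I].
  by rewrite -[in RHS](mkseq_nth 0%N I) /mkseq -map_comp.
exact/perm_sumn/perm_map.
Qed.

Lemma node_map_range v : (v < nverts (Node ds))%N -> (node_map v < nverts (Node cs))%N.
Proof.
case: v => [|w] hw; first exact: nverts_gt0.
case: (locate_spec hw) => h1 h2 _; rewrite /= ltnS offset_lt ?nth_I_lt //.
by case: (isoh h1) => _ -> //.
Qed.

Lemma node_map_inj u v : (u < nverts (Node ds))%N -> (v < nverts (Node ds))%N ->
  node_map u = node_map v -> u = v.
Proof.
case: u v => [|u] [|v] hu hv //= [] e.
case: (locate_spec hu) (locate_spec hv) => u1 u2 u3 [v1 v2 v3].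
case: (isoh u1) (isoh v1) => _ ru iu _ [_ rv _ _].
have := locate_offset (nth_I_lt u1) (ru _ u2).
rewrite e locate_offset ?nth_I_lt ?rv // => -[eI eh].
have uI : uniq I by rewrite (perm_uniq permI) iota_uniq.
have ek : (locate ds u).1 = (locate ds v).1.
  by apply/eqP; rewrite -(nth_uniq 0%N _ _ uI) ?size_I -?size_ds // eI.
rewrite ek in eh u2 iu; by rewrite u3 v3 ek (iu _ _ u2 v2 (esym eh)).
Qed.

Lemma node_map_par v : (v < nverts (Node ds))%N ->
  node_map (par (Node ds) v) = par (Node cs) (node_map v).
Proof.
case: v => [|w] hw; first by rewrite !par_root.
case: (locate_spec hw) => h1 h2 h3.
have hk := isoh h1; case: (hk) => _ rk ik pk.
rewrite [in LHS]h3 par_node // /node_map par_node ?nth_I_lt ?rk //.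
have [->|nj] := eqVneq (locate ds w).2 0%N; first by rewrite (Iso_root hk) eqxx.
have -> : (h (locate ds w).1 (locate ds w).2 == 0%N) = false.
  apply/negbTE/eqP; rewrite -(Iso_root hk) => /(ik _ _ h2 (nverts_gt0 _)).
  by apply/eqP.
by rewrite locate_offset ?nth_I_lt ?pk ?par_lt_nverts.
Qed.

Lemma iso_node : Iso (Node ds) (Node cs) node_map.
Proof.
split; [exact: nverts_node_iso | exact: node_map_range | exact: node_map_inj |].
exact: node_map_par.
Qed.

End NodeIso.

Lemma choice_below (P : nat -> (nat -> nat) -> Prop) n :
  (forall i, (i < n)%N -> exists f, P i f) ->
  exists h : nat -> nat -> nat, forall i, (i < n)%N -> P i (h i).
Proof.
elim: n => [|n IH] H; first by exists (fun _ => id).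
have [h hh] := IH (fun i hi => H i (ltnW hi)).
have [f hf] := H n (ltnSn n).
exists (fun i => if i == n then f else h i) => i; rewrite ltnS leq_eqVlt.
by case: eqP => [->|_] //= hi; apply: hh.
Qed.

Lemma canon_iso t : exists f, Iso (canon t) t f.
Proof.
elim/tree_mem_ind: t => cs IH; set ds := sort tle (map canon cs).
have sort_perm : perm_eq ds (map canon cs) by rewrite perm_sort.
have [I permI eds] := perm_iotaP leaf sort_perm.
rewrite size_map in permI.
have size_ds : size ds = size cs by rewrite eds size_map (perm_size permI) size_iota.
have [h isoh] : exists h : nat -> nat -> nat, forall i, (i < size ds)%N ->
    Iso (nth leaf ds i) (nth leaf cs (nth 0%N I i)) (h i).
  apply: (@choice_below (fun i f => Iso (nth leaf ds i) (nth leaf cs (nth 0%N I i)) f)).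
  move=> i hi; have hIi := nth_I_lt size_ds permI hi.
  rewrite eds (nth_map 0%N) ?(nth_map leaf) //; last by rewrite (perm_size permI) size_iota -size_ds.
  by apply/IH/mem_nth.
by exists (node_map cs ds I h); apply: iso_node.
Qed.

Lemma aut_card_canon t : aut_card (canon t) = aut_card t.
Proof. by have [f hf] := canon_iso t; apply: aut_card_iso hf. Qed.

(* A tree all of whose vertices hang from the root (a corolla) has all
   permutations fixing the root as automorphisms. *)
Lemma aut_card_star t : (forall v, (v < nverts t)%N -> par t v = 0%N) ->
  aut_card t = (nverts t).-1`!.
Proof.
move=> h; have hp (v : 'I_(nverts t)) : parent v = root_vertex t.
  by apply: val_inj; rewrite parent_val h.
have E : auts t =i perm_on [set~ root_vertex t].
  move=> s; rewrite inE [s \in perm_on _]unfold_in.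
  apply/forallP/subsetP => [H x|H v]; last first.
    rewrite !hp; apply/negPn/negP => hs.
    by have := H (root_vertex t); rewrite !inE eqxx hs => /(_ isT).
  by rewrite !inE; apply: contra => /eqP ->; move: (H (root_vertex t)); rewrite !hp.
by rewrite /aut_card -/(auts t) (eq_card E) card_perm cardsC1 card_ord.
Qed.

Lemma par_corolla n v : par (corolla n) v = 0%N.
Proof.
rewrite /par /corolla par_list_node.
have -> : forall o, par_children (nseq n leaf) o 0 = nseq n 0%N.
  by elim: n => //= n IH o; rewrite IH.
by case: v => //= v; rewrite nth_nseq; case: ifP.
Qed.

Lemma nverts_corolla n : nverts (corolla n) = n.+1.
Proof. by rewrite /corolla /=; congr S; elim: n => //= n ->. Qed.

Lemma aut_card_corolla n : aut_card (corolla n) = n`!.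
Proof. by rewrite aut_card_star ?nverts_corolla // => v _; apply: par_corolla. Qed.

(* sigma only depends on the monomial of a forest; one-vertex components
   (the corolla C_0) contribute |Aut| = 1. *)
Lemma sigma_mono f : sigma (mono f) = sigma f.
Proof.
rewrite /sigma /mono (perm_big _ (permEl (perm_sort _ _))) big_map big_filter big_mkcond /=.
apply: eq_bigr => t _; rewrite aut_card_canon; case: ifP => // /negbT.
by case: t => [[|c cs]] //= _; rewrite (aut_card_corolla 0).
Qed.

Lemma sigma_corollas c : sigma (map corolla c) = \prod_(i <- c) i`!.
Proof. by rewrite /sigma big_map; apply: eq_bigr => i _; rewrite aut_card_corolla. Qed.

Section NormalizedAntipode.
Variable k : fieldType.
Hypothesis char0 : [pchar k]%R =i pred0.
Local Open Scope ring_scope.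

Definition rhs_sigma_mass n (Q : pred (seq tree)) : k :=
  \sum_(c <- comps n | Q (mono (map corolla c))) (-1) ^+ size c.

Lemma mass_rhs_Ssig n Q : (0 < n)%N -> mass Q (rhs_Ssig k n) = rhs_sigma_mass n Q.
Proof.
move=> hn; rewrite /rhs_Ssig mass_flatten big_map /rhs_sigma_mass comps_pos //.
rewrite big_flatten big_map; apply: eq_bigr => r _.
rewrite (@mass_map k _ (fun _ => (-1) ^+ r)) [LHS]big_seq_cond [RHS]big_seq_cond.
by apply: eq_bigr => c /andP [+ _]; rewrite mem_compositions => /and3P [/eqP -> _ _].
Qed.

(* Renormalizing by sigma divides the term of a composition c by
   sigma(C_n) = n! and multiplies it by sigma(C_c1 ... C_cr) = c1! ... cr!. *)
Lemma Ssig_corolla (S : seq tree -> formal k) n : (0 < n)%N ->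
  heq (S [:: corolla n]) (rhs_S k n) -> heq (Ssig S [:: corolla n]) (rhs_Ssig k n).
Proof.
move=> hn hS m; rewrite !coef_mass mass_rhs_Ssig // /mass big_map /=.
have -> : \sum_(p <- S [:: corolla n] | mono p.2 == m)
            ((sigma [:: corolla n])%:R^-1 * p.1 * (sigma p.2)%:R) =
          (sigma [:: corolla n])%:R^-1 * coef (S [:: corolla n]) m * (sigma m)%:R.
  rewrite /coef big_distrr big_distrl /=; apply: eq_bigr => p /eqP hp.
  by rewrite -(sigma_mono p.2) hp.
rewrite hS coef_mass mass_rhs_S // /rhs_mass /rhs_sigma_mass big_distrr big_distrl /=.
apply: eq_bigr => c /eqP <-.
rewrite sigma_mono sigma_corollas /sigma big_seq1 aut_card_corolla.
have hP : (\prod_(i <- c) i`!)%:R != 0 :> k.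
  by rewrite natf_neq0 // prodn_gt0 // => i; apply: fact_gt0.
by rewrite -mulrA divfK // (mulrC _ (n`!)%:R) mulKf // natf_neq0 ?fact_gt0.
Qed.

End NormalizedAntipode.

Theorem mainTheorem2 (k : fieldType) (char0 : [pchar k]%R =i pred0)
  (S : seq tree -> formal k)
  (S_iso : forall f g, is_mono f -> is_mono g -> mono f = mono g -> heq (S f) (S g))
  (S_left : forall f, is_mono f -> heq (conv_left S f) (eta_eps k f))
  (S_right : forall f, is_mono f -> heq (conv_right S f) (eta_eps k f))
  (n : nat) (hn : (1 <= n)%N) :
  heq (S [:: corolla n]) (rhs_S k n) /\ heq (Ssig S [:: corolla n]) (rhs_Ssig k n).
Proof.
have hS : heq (S [:: corolla n]) (rhs_S k n).
  apply: mass_heq => Q; have := mass_S_corolla char0 S_left n Q.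
  by rewrite /corolla_forest hn mass_rhs_S.
by split => //; apply: Ssig_corolla.
Qed.
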